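(* For a nontrivial finite abelian $p$-group $A$ ($p$ prime) with exponent $p^d$, let $t(A)$ be the unique positive integer such that $A\cong \mathbb{Z}/p^{d_1}\mathbb{Z}\oplus\cdots\oplus\mathbb{Z}/p^{d_k}\mathbb{Z}\oplus(\mathbb{Z}/p^{d}\mathbb{Z})^{t(A)}$ with $d_1\le d_2\le\cdots\le d_k<d$. Then: (i) For every prime $p$, every nontrivial finite abelian $p$-group $A$ and every noncyclic finite $p$-group $B$, $1-p^{-t(A)p}\le \psi(A,B)\le 1$. (ii) There is a constant $C>0$ such that for every prime $p$, every nontrivial finite abelian $p$-group $A$ and every nontrivial finite cyclic $p$-group $B$, $\left|\psi(A,B)-\left(1-p^{-t(A)}\right)\right|\le C\,p^{-t(A)-1}$. In particular, there is a constant $C'>0$ such that $|\psi(A,B)-1|\le C'/p$ for every prime $p$, every nontrivial finite abelian $p$-group $A$ and every nontrivial finite $p$-group $B$.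
   Context: For a finite group $G$, the average order is $a(G)=\frac{1}{|G|}\sum_{g\in G}\mathrm{order}(g)$ and $m(G)$ denotes the maximum order of an element of $G$. For $p$-groups $A,B$, $\psi(A,B)=\frac{a(A\wr B)}{m(A)\,a(B)}$. For groups $A,B$, let $K=\prod_{b\in B}A$, on which $B$ acts by $x\cdot(\alpha_b)_b=(\alpha_{x^{-1}b})_b$ for $x\in B$; the wreath product $A\wr B$ is the semidirect product $K\rtimes B$ for this action. The paper's big-$O$ convention $g=O(f)$ means $|g|\le M|f|$ always, for a fixed constant $M$; this is what the constants $C$, $C'$ express. *)

From HB Require Import structures.
From mathcomp Require Import all_boot all_order all_algebra all_fingroup all_solvable.
Set Implicit Arguments. Unset Strict Implicit. Unset Printing Implicit Defensive.
Import GRing.Theory Num.Theory.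

Local Open Scope group_scope.

(* The (regular) wreath product aT wr bT = K ><| bT with K = {ffun bT -> aT},
   where x in bT acts on K by (x . k) b = k (x^-1 b), so that
   (k, x) * (l, y) = (k * (x . l), x * y). *)
Section Wreath.
Variables (aT bT : finGroupType).

Definition wreath_of := ({ffun bT -> aT} * bT)%type.
HB.instance Definition _ := Finite.on wreath_of.

Definition wr_act (x : bT) (k : {ffun bT -> aT}) : {ffun bT -> aT} :=
  [ffun b => k (x^-1 * b)].

Definition wr_mul (u v : wreath_of) : wreath_of :=
  ([ffun b => u.1 b * wr_act u.2 v.1 b], u.2 * v.2).
Definition wr_one : wreath_of := ([ffun => 1], 1).
Definition wr_inv (u : wreath_of) : wreath_of :=
  (wr_act u.2^-1 [ffun b => (u.1 b)^-1], u.2^-1).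

Lemma wr_mulA : associative wr_mul.
Proof.
move=> [k x] [l y] [m z]; rewrite /wr_mul /wr_act /=; congr (_, _); last first.
  by rewrite mulgA.
by apply/ffunP=> b; rewrite !ffunE /= mulgA invMg mulgA.
Qed.

Lemma wr_mul1 : left_id wr_one wr_mul.
Proof.
move=> [k x]; rewrite /wr_mul /wr_act /=; congr (_, _); last by rewrite mul1g.
by apply/ffunP=> b; rewrite !ffunE /= invg1 !mul1g.
Qed.

Lemma wr_mulV : left_inverse wr_one wr_inv wr_mul.
Proof.
move=> [k x]; rewrite /wr_mul /wr_act /=; congr (_, _); last by rewrite mulVg.
by apply/ffunP=> b; rewrite !ffunE /= mulVg.
Qed.

HB.instance Definition _ := Finite_isGroup.Build wreath_of wr_mulA wr_mul1 wr_mulV.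

End Wreath.

Notation "A 'wr' B" := (wreath_of A B) (at level 40) : type_scope.

Local Open Scope ring_scope.

Definition avg_order (gT : finGroupType) : rat :=
  (\sum_(g : gT) #[g]%g)%:R / #|gT|%:R.

Definition max_order (gT : finGroupType) : nat := \max_(g : gT) #[g]%g.

Definition psi (aT bT : finGroupType) : rat :=
  avg_order (aT wr bT) / ((max_order aT)%:R * avg_order bT).

Definition tA (aT : finGroupType) : nat :=
  count_mem (exponent [set: aT]) (abelian_type [set: aT]).

(* Writing [N] for the function [b |-> \prod_(i < #[x]) k (x ^- i * b)], we have
   [(k, x) ^+ #[x] = (N, 1)], so [#[(k, x)] = #[x] * #[(N, 1)]] and psi(A, B) is the
   [#[x]]-weighted mean over [x] in B of the average over k of [#[(N, 1)] / exp(A)].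
   For abelian A, N is constant on the cosets [<[x]> :* b], and replacing k by N on a
   transversal of these cosets is a bijection; as [#|A : 'Ohm_(d-1)(A)| = p ^ t(A)], N takes
   all its values in ['Ohm_(d-1)(A)] with probability exactly [beta = p ^- (t(A) * |B : <[x]>|)].
   Then [#[(N, 1)] <= p ^ (d-1)], and otherwise [#[(N, 1)] = p ^ d = exp(A)], so the average
   lies between [1 - beta] and [1 - beta + beta / p].  The index [|B : <[x]>|] is at least p
   when B is not cyclic; when B is cyclic, only the generators have index 1, and they carry
   at least half of the total weight. *)

From HB Require Import structures.
From mathcomp Require Import all_boot all_order all_algebra all_fingroup all_solvable.
From mathcomp Require Import zify ring lra.
Import Order.TTheory GRing.Theory Num.Theory.

Set Implicit Arguments. Unset Strict Implicit. Unset Printing Implicit Defensive.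

Local Open Scope group_scope.

Section WreathElementOrders.
Variables aT bT : finGroupType.
Implicit Types (k f : {ffun bT -> aT}) (x b : bT).

Lemma wr_mulE (u v : aT wr bT) :
  u * v = ([ffun b => u.1 b * v.1 (u.2^-1 * b)], u.2 * v.2).
Proof. by congr (_, _); apply/ffunP=> b; rewrite !ffunE. Qed.

Lemma expg_wr k x n :
  ((k, x) : aT wr bT) ^+ n = ([ffun b => \prod_(i < n) k (x ^- i * b)], x ^+ n).
Proof.
elim: n => [|n IHn].
  by congr (_, _); apply/ffunP=> b; rewrite !ffunE big_ord0.
rewrite expgS IHn wr_mulE /= -expgS; congr (_, _).
apply/ffunP=> b; rewrite !ffunE big_ord_recl expg0 invg1 mul1g; congr (_ * _).
by apply: eq_bigr => i _; rewrite expgS invMg mulgA.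
Qed.

Lemma expg_wr_base f n :
  ((f, 1) : aT wr bT) ^+ n = ([ffun b => f b ^+ n], 1).
Proof.
rewrite expg_wr expg1n; congr (_, _); apply/ffunP=> b; rewrite !ffunE.
by under eq_bigr do rewrite expg1n invg1 mul1g; rewrite prodg_const card_ord.
Qed.

Lemma order_wr_base_dvdn f n :
  (#[((f, 1) : aT wr bT)] %| n) = [forall b, #[f b] %| n].
Proof.
rewrite order_dvdn expg_wr_base; apply/eqP/forallP => [[/ffunP fn1] b | fn1].
  by have := fn1 b; rewrite !ffunE order_dvdn => ->.
by congr (_, _); apply/ffunP=> b; rewrite !ffunE; apply/eqP; rewrite -order_dvdn.
Qed.

Definition wr_norm k x : {ffun bT -> aT} :=
  [ffun b => \prod_(i < #[x]) k (x ^- i * b)].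

Lemma order_wr k x :
  #[((k, x) : aT wr bT)] = (#[x] * #[((wr_norm k x, 1%g) : aT wr bT)])%N.
Proof.
set u := ((k, x) : aT wr bT).
have normE : ((wr_norm k x, 1) : aT wr bT) = u ^+ #[x].
  by rewrite expg_wr expg_order.
have x_dvd_u : #[x] %| #[u].
  by have := expg_order u; rewrite /u expg_wr => -[_]; rewrite order_dvdn => ->.
by rewrite normE orderXdiv // mulnC divnK.
Qed.

Lemma sum_order_wr :
  \sum_(u : aT wr bT) #[u] = (\sum_x #[x] * \sum_k #[((wr_norm k x, 1%g) : aT wr bT)])%N.
Proof.
rewrite (eq_bigr (fun u : {ffun bT -> aT} * bT => #[(u.1, u.2) : aT wr bT])); last by case.
rewrite -(pair_bigA _ (fun k x => #[(k, x) : aT wr bT])) exchange_big /=.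
by apply: eq_bigr => x _; rewrite big_distrr; apply: eq_bigr => k _; rewrite order_wr.
Qed.

Local Open Scope ring_scope.

Definition norm_order_avg x : rat :=
  (\sum_(k : {ffun bT -> aT}) #[((wr_norm k x, 1%g) : aT wr bT)])%:R
    / (#|{ffun bT -> aT}| * max_order aT)%:R.

Lemma psiE :
  psi aT bT = (\sum_(x : bT) #[x]%:R * norm_order_avg x) / \sum_(x : bT) #[x]%:R.
Proof.
have pos_card (T : finType) (t : T) : (0 < #|T|)%N by apply/card_gt0P; exists t.
have K_gt0 : (0 < #|{ffun bT -> aT}|)%N := pos_card _ [ffun=> 1%g].
have m_gt0 : (0 < max_order aT)%N.
  by apply: leq_trans (leq_bigmax 1%g); rewrite order_gt0.
have W_gt0 : (0 < \sum_(x : bT) #[x])%N.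
  by rewrite (bigD1 1%g) //= order1.
rewrite /psi /avg_order sum_order_wr card_prod natr_sum.
under [in RHS]eq_bigr do rewrite /norm_order_avg mulrA -natrM.
rewrite -mulr_suml -!natr_sum !natrM.
by field; rewrite !pnatr_eq0 -!lt0n W_gt0 m_gt0 K_gt0 (pos_card _ 1%g).
Qed.

End WreathElementOrders.

Lemma card_family_prod (I V : finType) (F : I -> pred V) :
  #|family F| = (\prod_(i : I) #|F i|)%N.
Proof. by rewrite card_family foldrE big_image. Qed.

Section AbelianNorm.
Variables aT bT : finGroupType.
Hypothesis cA : abelian [set: aT].
Variable x : bT.
Implicit Types (k : {ffun bT -> aT}) (b c : bT).

Lemma wr_normE k c :
  wr_norm k x c = k c * \prod_(i < #[x].-1) k (x ^- i.+1 * c).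
Proof. by rewrite ffunE -(prednK (order_gt0 x)) big_ord_recl expg0 invg1 mul1g. Qed.

Lemma wr_norm_mulx k b : wr_norm k x (x * b) = wr_norm k x b.
Proof.
have [m ox] : exists m, #[x] = m.+1 by exists #[x].-1; rewrite prednK.
have xm : x ^- m = x by apply: (mulgI (x ^+ m)); rewrite mulgV -expgSr -ox expg_order.
rewrite wr_normE ffunE ox big_ord_recr /= xm (centsP cA) ?inE //=; congr (_ * _).
by apply: eq_bigr => i _; rewrite expgS invMg -mulgA mulKg.
Qed.

Lemma wr_norm_rcoset k b c : c \in <[x]> :* b -> wr_norm k x c = wr_norm k x b.
Proof.
case/rcosetP=> _ /cycleP[j ->] ->; elim: j => [|j IHj]; first by rewrite mul1g.
by rewrite expgS -mulgA wr_norm_mulx.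
Qed.

Let P := rcosets <[x]> [set: bT].
Let S := transversal P [set: bT].

Let trS : is_transversal S P [set: bT].
Proof. exact/transversalP/rcosets_partition/subsetT. Qed.

Let transversal_rcoset_uniq c j : c \in S -> 0 < j < #[x] -> x ^- j * c \notin S.
Proof.
move=> Sc /andP[j_gt0 lt_j_x]; apply/negP => Sxc.
have tiP : trivIset P by case/and3P: (rcosets_partition (subsetT <[x]>)).
have Px : <[x]> :* c \in P by apply/rcosetsP; exists c; rewrite ?inE.
have : pblock P (x ^- j * c) = pblock P c.
  rewrite !(def_pblock tiP Px) ?rcoset_refl //.
  by rewrite mem_rcoset mulgK groupV mem_cycle.
move/(pblock_inj trS Sxc Sc)/(canRL (mulgK c)); rewrite mulgV => /eqP.
rewrite eq_invg1 -order_dvdn => /(dvdn_leq j_gt0).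
by rewrite leqNgt lt_j_x.
Qed.

Let mem_rcoset_transversal b : exists2 c, c \in S & b \in <[x]> :* c.
Proof.
have Pb : <[x]> :* b \in P by apply/rcosetsP; exists b; rewrite ?inE.
set c := transversal_repr 1 S (<[x]> :* b).
exists c; first by have := repr_mem_transversal trS 1 Pb.
have := repr_mem_pblock trS 1 Pb; rewrite -/c => /rcoset_eqP eq_cb.
by rewrite eq_cb rcoset_refl.
Qed.

Let norm_on_transversal k : {ffun bT -> aT} := [ffun b => if b \in S then wr_norm k x b else k b].

Let norm_on_transversal_inj : injective norm_on_transversal.
Proof.
move=> k1 k2 eq12.
have offS b : b \notin S -> k1 b = k2 b.
  by move=> Sb; have := congr1 (fun k => k b) eq12; rewrite !ffunE (negbTE Sb).
apply/ffunP=> c; have [Sc | /offS//] := boolP (c \in S).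
have := congr1 (fun k => k c) eq12; rewrite !ffunE Sc.
rewrite -(prednK (order_gt0 x)) !big_ord_recl expg0 invg1 !mul1g /=.
rewrite (eq_bigr (fun i : 'I_#[x].-1 => k2 (x ^- i.+1 * c))) => [/mulIg //| i _].
apply: offS; apply: transversal_rcoset_uniq => //.
by rewrite /bump add1n /= -ltn_predRL ltn_ord.
Qed.

Lemma card_wr_norm_in (Om : {set aT}) :
  (#|[set k | [forall b, wr_norm k x b \in Om]]| * #|aT| ^ #|[set: bT] : <[x]>|
    = #|Om| ^ #|[set: bT] : <[x]>| * #|{ffun bT -> aT}|)%N.
Proof.
have cardS : #|S| = #|[set: bT] : <[x]>| by rewrite (card_transversal trS).
pose F b : pred aT := if b \in S then [in Om] else xpredT.
have -> : [set k | [forall b, wr_norm k x b \in Om]] = norm_on_transversal @^-1: [set k' in family F].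
  apply/setP=> k; rewrite !inE; apply/forallP/familyP => [Om_k b | Om_k b].
    by rewrite /F ffunE; case: ifP.
  have [c Sc /(wr_norm_rcoset k) ->] := mem_rcoset_transversal b.
  by have := Om_k c; rewrite /F ffunE Sc.
rewrite card_preimset // cardsE card_family_prod card_ffun.
have -> : (\prod_b #|F b| = #|Om| ^ #|S| * #|aT| ^ #|~: S|)%N.
  rewrite (bigID [in S]) -!prod_nat_const; congr (_ * _)%N.
    by apply: eq_bigr => b /= Sb; rewrite /F Sb.
  apply: eq_big => [b | b /= nSb]; first by rewrite inE.
  by rewrite /F (negbTE nSb); apply: eq_card.
by rewrite -cardS -mulnA -expnD addnC cardsC.
Qed.

End AbelianNorm.

Lemma max_order_exponent (gT : finGroupType) :
  nilpotent [set: gT] -> max_order gT = exponent [set: gT].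
Proof.
case/exponent_witness=> w _ expw; apply/eqP; rewrite eqn_leq; apply/andP; split.
  by apply/bigmax_leqP=> g _; rewrite dvdn_leq ?exponent_gt0 ?dvdn_exponent ?inE.
by rewrite expw (leq_bigmax w).
Qed.

Lemma tA_gt0 (aT : finGroupType) : abelian [set: aT] -> (1 < #|aT|)%N -> (0 < tA aT)%N.
Proof.
move=> cA ntA; rewrite /tA /abelian_type genGidG.
have [n ->] : exists n, #|[set: aT]| = n.+1 by exists #|aT|.-1; rewrite cardsT prednK // ltnW.
have ntG : [set: aT] :!=: 1 by rewrite -cardG_gt1 cardsT.
by rewrite /= [abelian _ && _](introT andP (conj cA ntG)) /= eqxx.
Qed.

Lemma pgroup_indexg_geq (gT : finGroupType) (p : nat) (G H : {group gT}) :
  prime p -> p.-group G -> ~~ (G \subset H) -> (p <= #|G : H|)%N.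
Proof.
move=> p_pr pG; rewrite -indexg_gt1.
have /p_natP[[|k] ->] := pnat_dvd (dvdn_indexg G H) pG; first by rewrite expn0.
by rewrite expnS leq_pmulr ?expn_gt0 ?prime_gt0.
Qed.

Lemma sum_order_cyclic_pgroup (gT : finGroupType) (p : nat) :
  prime p -> p.-group [set: gT] -> cyclic [set: gT] -> (1 < #|gT|)%N ->
  (\sum_(x : gT) #[x] * (if #|[set: gT] : <[x]>| == 1 then 1 else p)
     <= 2 * \sum_(x : gT) #[x])%N.
Proof.
(* Each term is at most [n = #|gT|], while the generators alone contribute
   [totient n * n >= n * n / 2]. *)
move=> p_pr pG cG ntG; set n := #|gT|.
have order_index x : (#[x] * #|[set: gT] : <[x]>| = n)%N.
  by rewrite /n -cardsT -(Lagrange (subsetT <[x]>)).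
have term_le x : (#[x] * (if #|[set: gT] : <[x]>| == 1 then 1 else p) <= n)%N.
  rewrite -(order_index x); case: eqP => [-> // | idx_neq1]; rewrite leq_mul2l.
  apply/orP; right; apply: pgroup_indexg_geq => //; rewrite -indexg_gt1.
  by rewrite ltn_neqAle eq_sym; apply/andP; split; [apply/eqP | apply: indexg_gt0].
have [a defG] := cyclicP cG.
have oa : #[a] = n by rewrite orderE -defG cardsT.
have gen_sum : (totient n * n <= \sum_(x : gT) #[x])%N.
  rewrite (bigID [pred x | generator <[a]> x]) /= -oa totient_gen.
  rewrite (eq_bigr (fun=> #[a])) => [|x /eqP gen_x]; last by rewrite !orderE gen_x.
  by rewrite sum_nat_const cardsE leq_addr.
have n_le_totient : (n <= 2 * totient n)%N.
  have [e n_pe] : exists e, n = (p ^ e.+1)%N.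
    move: ntG; rewrite /n -cardsT; have /p_natP[[|e] ->] := pG.
      by rewrite expn0.
    by exists e.
  rewrite n_pe totient_pfactor // expnS mulnA leq_mul2r; apply/orP; right.
  by have := prime_gt1 p_pr; lia.
apply: (@leq_trans (\sum_(x : gT) n)); first by apply: leq_sum => x _; apply: term_le.
rewrite sum_nat_const -/n; apply: leq_trans (leq_mul n_le_totient (leqnn n)) _.
by rewrite -mulnA leq_mul2l gen_sum orbT.
Qed.

Lemma ler_natrVXn (R : numFieldType) (p a b : nat) :
  (0 < p)%N -> (b <= a)%N -> (p%:R ^- a <= p%:R ^- b :> R)%R.
Proof.
move=> p_gt0 le_ba; rewrite -!exprVn ler_wiXn2l // ?invr_ge0 ?ler0n //.
by rewrite invf_le1 ?ltr0n // ler1n.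
Qed.

Section AbelianPGroup.
Variables (p : nat) (aT : finGroupType).
Hypotheses (p_pr : prime p) (pA : p.-group [set: aT]) (cA : abelian [set: aT]).
Hypothesis ntA : (1 < #|aT|)%N.

Let d := logn p (exponent [set: aT]).
Let Om := 'Ohm_d.-1([set: aT]).

Let exponentA : exponent [set: aT] = (p ^ d)%N.
Proof. by rewrite -p_part part_pnat_id // pnat_exponent. Qed.

Let d_gt0 : (0 < d)%N.
Proof.
rewrite lt0n; apply: contraTneq ntA => d0.
by rewrite -cardsT cardG_gt1 negbK trivg_exponent exponentA d0.
Qed.

Let mem_OhmA a : (a \in Om) = (#[a] %| p ^ d.-1)%N.
Proof.
rewrite /Om (OhmEabelian pA (abelianS (Ohm_sub _ _) cA)).
by rewrite !inE order_dvdn.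
Qed.

Lemma card_Ohm_tA : #|aT| = (p ^ tA aT * #|Om|)%N.
Proof.
have [b defA ordb] := abelian_structure cA.
have OmdA : 'Ohm_d([set: aT]) = [set: aT].
  apply/setP=> a; rewrite (OhmEabelian pA (abelianS (Ohm_sub _ _) cA)) !inE /=.
  by rewrite -exponentA expg_exponent ?inE ?eqxx.
have tE : tA aT = logn p #|'Ohm_d.-1.+1([set: aT]) : Om|.
  rewrite /tA -ordb count_map -(count_logn_dprod_cycle _ _ defA) exponentA.
  apply: eq_in_count => y _ /=.
  have : (#[y] %| p ^ d)%N by rewrite -exponentA dvdn_exponent ?inE.
  case/(dvdn_pfactor _ _ p_pr) => e le_ed ->; rewrite pfactorK // eqn_exp2l ?prime_gt1 //.
  by rewrite eqn_leq le_ed -{1}(prednK d_gt0).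
rewrite tE prednK ?d_gt0 // OmdA -cardsT -(Lagrange (Ohm_sub d.-1 [set: aT])) mulnC.
by rewrite -p_part part_pnat_id // (pnat_dvd (dvdn_indexg _ _) pA).
Qed.

Variable bT : finGroupType.
Implicit Type f : {ffun bT -> aT}.

Lemma order_wr_base_dvdn_Ohm f :
  (#[((f, 1%g) : aT wr bT)] %| p ^ d.-1)%N = [forall b, f b \in Om].
Proof. by rewrite order_wr_base_dvdn; apply: eq_forallb => b; rewrite mem_OhmA. Qed.

Lemma order_wr_base_notOhm f :
  ~~ [forall b, f b \in Om] -> #[((f, 1%g) : aT wr bT)] = (p ^ d)%N.
Proof.
rewrite -order_wr_base_dvdn_Ohm => not_dvd.
have : (#[((f, 1%g) : aT wr bT)] %| p ^ d)%N.
  by rewrite order_wr_base_dvdn; apply/forallP=> b; rewrite -exponentA dvdn_exponent ?inE.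
case/(dvdn_pfactor _ _ p_pr)=> e le_ed oE; rewrite oE; congr (_ ^ _)%N.
apply/eqP; rewrite eqn_leq le_ed leqNgt; apply: contra not_dvd => lt_ed.
by rewrite oE dvdn_exp2l // -ltnS prednK ?d_gt0.
Qed.

Local Open Scope ring_scope.

Lemma card_wr_norm_Ohm (x : bT) :
  (#|[set k | [forall b, wr_norm k x b \in Om]]| * p ^ (tA aT * #|[set: bT] : <[x]>|)
    = #|{ffun bT -> aT}|)%N.
Proof.
have Om_gt0 : (0 < #|Om| ^ #|[set: bT] : <[x]>|)%N by rewrite expn_gt0 cardG_gt0.
apply/eqP; rewrite -(eqn_pmul2r Om_gt0) -mulnA expnM -expnMn -card_Ohm_tA.
by rewrite (card_wr_norm_in cA) mulnC.
Qed.

Lemma norm_order_avg_bounds (x : bT) (beta := p%:R ^- (tA aT * #|[set: bT] : <[x]>|)) :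
  1 - beta <= norm_order_avg aT x <= 1 - beta + beta / p%:R.
Proof.
set bad := [set k | [forall b, wr_norm k x b \in Om]].
pose ord k := #[((wr_norm k x, 1%g) : aT wr bT)].
set K := #|{ffun bT -> aT}|.
have sum_ordE : (\sum_k ord k = \sum_(k in bad) ord k + #|~: bad| * p ^ d)%N.
  rewrite (bigID [in bad]) -sum_nat_const; congr (_ + _)%N.
  apply: eq_big => [k | k /= bad'k]; rewrite ?inE // /ord.
  by apply: order_wr_base_notOhm; rewrite inE in bad'k.
have sum_bad_le : (\sum_(k in bad) ord k <= #|bad| * p ^ d.-1)%N.
  rewrite -sum_nat_const; apply: leq_sum => k bad_k.
  rewrite dvdn_leq ?expn_gt0 ?prime_gt0 // order_wr_base_dvdn_Ohm.
  by rewrite inE in bad_k.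
have K_split : K%:R = #|bad|%:R + #|~: bad|%:R :> rat by rewrite -natrD cardsC.
have K_gt0 : (0 < K)%N by apply/card_gt0P; exists [ffun=> 1%g].
have bad_gt0 : (0 < #|bad|)%N.
  by move: K_gt0; rewrite /K -(card_wr_norm_Ohm x) muln_gt0 => /andP[].
have betaE : beta = #|bad|%:R / K%:R.
  rewrite /K -(card_wr_norm_Ohm x) natrM natrX invfM mulrA mulfV ?mul1r //.
  by rewrite pnatr_eq0 -lt0n.
have P_split : (p ^ d)%:R = (p ^ d.-1)%:R * p%:R :> rat.
  by rewrite -natrM -expnSr prednK ?d_gt0.
set S := (\sum_(k in bad) ord k)%N in sum_ordE sum_bad_le.
have avgE : norm_order_avg aT x = 1 - beta + S%:R / (K%:R * (p ^ d)%:R).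
  rewrite /norm_order_avg (max_order_exponent (abelian_nil cA)) exponentA.
  rewrite [X in X%:R / _]sum_ordE betaE natrD !natrM K_split.
  by field; rewrite -K_split !pnatr_eq0 -!lt0n expn_gt0 prime_gt0.
rewrite avgE lerDl divr_ge0 ?mulr_ge0 ?ler0n //= lerD2l betaE P_split.
have -> : #|bad|%:R / K%:R / p%:R
          = (#|bad| * p ^ d.-1)%:R / (K%:R * ((p ^ d.-1)%:R * p%:R)) :> rat.
  by rewrite natrM; field; rewrite !pnatr_eq0 -!lt0n expn_gt0 prime_gt0.
by rewrite ler_wpM2r ?invr_ge0 ?mulr_ge0 ?ler0n // ler_nat.
Qed.

Lemma norm_order_avg_le1 (x : bT) : norm_order_avg aT x <= 1.
Proof.
apply: le_trans (proj2 (andP (norm_order_avg_bounds x))) _.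
set beta := _ ^- _; have beta_ge0 : 0 <= beta by rewrite invr_ge0 exprn_ge0 ?ler0n.
have : beta / p%:R <= beta.
  by rewrite ler_pdivrMr ?ltr0n ?prime_gt0 // ler_peMr // ler1n prime_gt0.
lra.
Qed.

Let sum_order_gt0 : 0 < \sum_(x : bT) #[x]%:R :> rat.
Proof. by rewrite (bigD1 1%g) //= ltr_wpDr ?sumr_ge0 // ltr0n order_gt0. Qed.

Lemma psi_le1 : psi aT bT <= 1.
Proof.
rewrite psiE ler_pdivrMr ?sum_order_gt0 // mul1r; apply: ler_sum => x _.
by rewrite ler_piMr ?ler0n ?norm_order_avg_le1.
Qed.

Lemma psi_ge_index n :
  (forall x : bT, n <= #|[set: bT] : <[x]>|)%N -> 1 - p%:R ^- (tA aT * n) <= psi aT bT.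
Proof.
move=> idx_ge; rewrite psiE ler_pdivlMr ?sum_order_gt0 // mulr_sumr; apply: ler_sum => x _.
rewrite mulrC ler_wpM2l ?ler0n //.
apply: le_trans (proj1 (andP (norm_order_avg_bounds x))).
by rewrite lerD2l lerN2 ler_natrVXn ?prime_gt0 // leq_mul2l idx_ge orbT.
Qed.

Lemma psi_cyclic_le :
  p.-group [set: bT] -> cyclic [set: bT] -> (1 < #|bT|)%N ->
  psi aT bT <= 1 - p%:R ^- tA aT + 2 * p%:R ^- (tA aT).+1.
Proof.
move=> pB cB ntB; set a := 1 - _; set e := _ ^- _.
pose c (x : bT) := if #|[set: bT] : <[x]>| == 1%N then 1%N else p.
have e_ge0 : 0 <= e by rewrite invr_ge0 exprn_ge0 ?ler0n.
have p_e : p%:R * e = p%:R ^- tA aT.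
  by rewrite /e exprSr invfM mulrCA mulfV ?mulr1 // pnatr_eq0 -lt0n prime_gt0.
have avg_le x : norm_order_avg aT x <= a + e * (c x)%:R.
  rewrite /c; case: eqP => [idx1 | _].
    apply: le_trans (proj2 (andP (norm_order_avg_bounds x))) _.
    by rewrite idx1 muln1 mulr1 /a /e exprSr invfM.
  by rewrite mulrC p_e subrK norm_order_avg_le1.
have wc_le : \sum_(x : bT) #[x]%:R * (c x)%:R <= 2 * \sum_(x : bT) #[x]%:R :> rat.
  under eq_bigr do rewrite -natrM.
  by rewrite -!natr_sum -natrM ler_nat sum_order_cyclic_pgroup.
rewrite psiE ler_pdivrMr ?sum_order_gt0 //.
apply: (@le_trans _ _ (\sum_(x : bT) #[x]%:R * (a + e * (c x)%:R))).
  by apply: ler_sum => x _; rewrite ler_wpM2l ?ler0n.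
rewrite (eq_bigr (fun x => a * #[x]%:R + e * (#[x]%:R * (c x)%:R))) => [|x _].
  by rewrite big_split /= -!mulr_sumr; nra.
by ring.
Qed.

End AbelianPGroup.

Local Open Scope ring_scope.

Theorem theorem6 :
  (* (i) *)
  (forall (p : nat) (aT bT : finGroupType),
     prime p ->
     (p.-group [set: aT])%g -> abelian [set: aT] -> (1 < #|aT|)%N ->
     (p.-group [set: bT])%g -> ~~ cyclic [set: bT] ->
     1 - (p%:R : rat) ^- (tA aT * p) <= psi aT bT /\ psi aT bT <= 1)
  /\
  (* (ii) *)
  (exists C : rat, 0 < C /\
     forall (p : nat) (aT bT : finGroupType),
       prime p ->
       (p.-group [set: aT])%g -> abelian [set: aT] -> (1 < #|aT|)%N ->
       (p.-group [set: bT])%g -> cyclic [set: bT] -> (1 < #|bT|)%N ->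
       `|psi aT bT - (1 - (p%:R : rat) ^- tA aT)| <= C * (p%:R : rat) ^- (tA aT).+1)
  /\
  (* consequence *)
  (exists C' : rat, 0 < C' /\
     forall (p : nat) (aT bT : finGroupType),
       prime p ->
       (p.-group [set: aT])%g -> abelian [set: aT] -> (1 < #|aT|)%N ->
       (p.-group [set: bT])%g -> (1 < #|bT|)%N ->
       `|psi aT bT - 1| <= C' / p%:R).
Proof.
split; [|split].
- move=> p aT bT p_pr pA cA ntA pB ncB; split; last exact: psi_le1 p_pr pA cA ntA bT.
  apply: psi_ge_index => // x; apply: pgroup_indexg_geq => //.
  apply: contra ncB => sBx; apply/cyclicP; exists x.
  by apply/eqP; rewrite eqEsubset sBx subsetT.
- exists 2; split=> // p aT bT p_pr pA cA ntA pB cB ntB.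
  have lo := psi_ge_index p_pr pA cA ntA (fun x : bT => indexg_gt0 _ <[x]>).
  have hi := psi_cyclic_le p_pr pA cA ntA pB cB ntB.
  rewrite muln1 in lo; rewrite ger0_norm ?subr_ge0 //; lra.
exists 1; split=> // p aT bT p_pr pA cA ntA _ _.
have lo := psi_ge_index p_pr pA cA ntA (fun x : bT => indexg_gt0 _ <[x]>).
have hi := psi_le1 p_pr pA cA ntA bT.
have t_ge1 : p%:R ^- (tA aT * 1) <= p%:R ^- 1 :> rat.
  by apply: ler_natrVXn; [exact: prime_gt0 | rewrite muln1; exact: tA_gt0 cA ntA].
rewrite expr1 in t_ge1; rewrite mul1r ler_norml; lra.
Qed.
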